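(* In the atomic model under the Shapley scheme with exactly one large player of stake $a$ and all other players of stake $1$, if the total number of players satisfies $n\ge (2h-1)^2+h$, then the Price of Stability is at most $2$.
   Context: Atomic model with threshold $h$: $n$ players, one of stake $a$ and $n-1$ of stake $1$, where $h,a$ are integers with $2\le a\le h-1$. Each player opens her own pool or joins one; pools partition the players; a pool $S$ has reward $\rho(S)=1$ if its total stake is at least $h$ (winning) and $0$ otherwise. Shapley scheme: player $i$ in pool $S$ receives $\phi_i(S)=\sum_{T\subseteq S\setminus\{i\}}\frac{|T|!(|S|-|T|-1)!}{|S|!}(\rho(T\cup\{i\})-\rho(T))$. A partition into winning pools is a Nash equilibrium if no player can strictly increase her payment by moving to another pool of the partition or opening a new pool alone. $OPT(G)$ is the maximum number of pools of stake at least $h$ in a partition of the players; $W(\Pi)$ is the number of winning pools of $\Pi$; the Price of Stability is $\min_\Pi OPT(G)/W(\Pi)$ over Nash equilibrium partitions. *)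

From mathcomp Require Import all_boot all_order all_algebra.
Set Implicit Arguments. Unset Strict Implicit. Unset Printing Implicit Defensive.
Import Order.TTheory GRing.Theory Num.Theory.

Definition stake (n a : nat) (i : 'I_n) : nat := if val i == 0%N then a else 1%N.

Definition wt (n a : nat) (S : {set 'I_n}) : nat := (\sum_(i in S) stake a i)%N.

Definition rho (n h a : nat) (S : {set 'I_n}) : rat :=
  if (h <= wt a S)%N then 1%R else 0%R.

Definition shapley (n h a : nat) (i : 'I_n) (S : {set 'I_n}) : rat :=
  (\sum_(T : {set 'I_n} | T \subset S :\ i)
     ((#|T|`! * (#|S| - #|T| - 1)`!)%:R / (#|S|`!)%:R)
       * (rho h a (T :|: [set i]) - rho h a T))%R.

Definition W (n h a : nat) (P : {set {set 'I_n}}) : nat :=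
  #|[set S in P | (h <= wt a S)%N]|.

Definition OPT (n h a : nat) : nat :=
  (\max_(P : {set {set 'I_n}} | partition P [set: 'I_n]) W h a P)%N.

Definition NE (n h a : nat) (P : {set {set 'I_n}}) : Prop :=
  [/\ partition P [set: 'I_n],
      (forall S, S \in P -> (h <= wt a S)%N) &
      (forall i S, S \in P -> i \in S ->
         (forall S', S' \in P -> S' != S ->
            (shapley h a i (S' :|: [set i]) <= shapley h a i S)%R)
         /\ (shapley h a i [set i] <= shapley h a i S)%R)].

From mathcomp Require Import all_boot all_order all_algebra.
From mathcomp Require Import zify ring.
Import Order.TTheory GRing.Theory Num.Theory.

(* Compare every payment with the player's stake divided by 2h.  Put the
   large player together with k small players and split the other small
   players into pools of 2h-1 or 2h players, which is possible once there are
   about (2h-1)^2 of them.  A member of such a pool earns 1/|S| >= 1/(2h),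
   while joining a pool of at least 2h-1 others pays at most the stake over
   2h, and a pool of one player pays nothing.  Taking for k the last size at
   which the small players of the large pool still earn 1/(2h) makes staying
   in the large pool, and not joining it, optimal as well.  Finally every
   winning pool has stake at least h, while the total stake is below
   h + 2h #|P|, so OPT <= 2 #|P| = 2 W. *)

Set Implicit Arguments.
Unset Strict Implicit.

Lemma nat_crossing (P : pred nat) lo hi :
  lo <= hi -> P lo -> ~~ P hi -> exists2 k, lo <= k < hi & P k && ~~ P k.+1.
Proof.
move=> le_lo_hi Plo; elim: hi le_lo_hi => [|hi IHhi].
  by rewrite leqn0 => /eqP <-; rewrite Plo.
rewrite leq_eqVlt => /predU1P[<- | ]; first by rewrite Plo.
rewrite ltnS => le_lo_hi; case Phi: (P hi) => nPhi.
  by exists hi; rewrite ?Phi ?nPhi ?le_lo_hi ?ltnSn.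
have [k /andP[lo_k k_hi] Pk] := IHhi le_lo_hi (negbT Phi).
by exists k; rewrite // lo_k ltnW.
Qed.

Lemma leq_mulS_divn N d : 0 < d -> d * d.-1 <= N -> N <= d.+1 * (N %/ d).
Proof.
move=> d_gt0 le_N; have le_q : d.-1 <= N %/ d by rewrite leq_divRL // mulnC.
have lt_r := ltn_pmod N d_gt0.
by rewrite {1}(divn_eq N d) mulSn [d * _]mulnC; lia.
Qed.

Lemma card_ord_pred n (Q : pred nat) : #|[set i : 'I_n | Q i]| = count Q (iota 0 n).
Proof. by rewrite cardsE cardE /enum_mem size_filter -enumT -val_enum_ord count_map. Qed.

Lemma card_ord_leq n k : k < n -> #|[set i : 'I_n | i <= k]| = k.+1.
Proof.
move=> lt_kn; rewrite (card_ord_pred _ (fun p => p <= k)) -(subnKC lt_kn) iotaD count_cat.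
rewrite (@eq_in_count _ _ predT) => [|p]; last by rewrite mem_iota.
rewrite (@eq_in_count _ _ pred0 (iota (0 + k.+1) _)) => [|p]; last by rewrite mem_iota /=; lia.
by rewrite count_predT count_pred0 size_iota addn0.
Qed.

Lemma card_ord_shift n m (Q : pred nat) : m <= n ->
  #|[set i : 'I_n | (m <= i) && Q (i - m)]| = count Q (iota 0 (n - m)).
Proof.
move=> le_mn; rewrite (card_ord_pred _ (fun p => (m <= p) && Q (p - m))).
rewrite -(subnKC le_mn) iotaD count_cat addKn.
rewrite (@eq_in_count _ _ pred0) => [|p]; last by rewrite mem_iota /=; lia.
rewrite count_pred0 add0n -[m in iota (0 + m)]addn0 add0n iotaDl count_map.
by apply: eq_count => p /=; rewrite leq_addr addKn.
Qed.

Lemma count_iota_mono (Q : pred nat) m p :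
  m <= p -> count Q (iota 0 m) <= count Q (iota 0 p).
Proof. by move=> le_mp; rewrite -(subnKC le_mp) iotaD count_cat leq_addr. Qed.

Lemma count_mod_iota q c j : j < q -> count (fun p => p %% q == j) (iota 0 (c * q)) = c.
Proof.
move=> lt_jq; elim: c => [|c IHc] //; rewrite mulSn addnC iotaD count_cat IHc add0n.
rewrite -[c * q]addn0 iotaDl count_map (@eq_in_count _ _ (pred1 j)).
  by rewrite count_uniq_mem ?iota_uniq // mem_iota lt_jq addn1.
by move=> p; rewrite mem_iota /= modnMDl => /modn_small ->.
Qed.

Lemma count_mod_iota_bounds q c N j : j < q -> c * q <= N <= c.+1 * q ->
  c <= count (fun p => p %% q == j) (iota 0 N) <= c.+1.
Proof.
move=> lt_jq /andP[le_cN le_Nc].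
by rewrite -{1}(count_mod_iota c lt_jq) -(count_mod_iota c.+1 lt_jq) !count_iota_mono.
Qed.

Lemma ler_ratio (R : numFieldType) (p1 q1 p2 q2 : nat) : 0 < q1 -> 0 < q2 ->
  (p1%:R / q1%:R <= p2%:R / q2%:R :> R)%R = (p1 * q2 <= p2 * q1).
Proof.
move=> q1_gt0 q2_gt0.
by rewrite ler_pdivrMr ?ltr0n // mulrAC ler_pdivlMr ?ltr0n // -!natrM ler_nat.
Qed.

Lemma sum_subsets_card {R : nmodType} {T : finType} (A : {set T}) (F : nat -> R) :
  (\sum_(B : {set T} | B \subset A) F #|B| = \sum_(t < #|A|.+1) F t *+ 'C(#|A|, t))%R.
Proof.
rewrite (partition_big (fun B : {set T} => inord #|B| : 'I_#|A|.+1) predT) //=.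
apply: eq_bigr => t _; rewrite -cards_draws -sumr_const.
have le_BA (B : {set T}) : B \subset A -> #|B| < #|A|.+1.
  by rewrite ltnS; apply: subset_leq_card.
apply: eq_big => [B | B /andP[/le_BA ltB /eqP <-]]; last by rewrite inordK.
rewrite inE; case: (boolP (B \subset A)) => //= /le_BA ltB.
apply/eqP/eqP => [<- | eq_Bt]; first by rewrite inordK.
by apply: val_inj; rewrite /= inordK.
Qed.

Lemma sum_subsets_setD1 {R : nmodType} {T : finType} (A : {set T}) x
    (F : {set T} -> R) : x \in A ->
  (\sum_(B : {set T} | B \subset A) F B =
   \sum_(B : {set T} | B \subset A :\ x) F B
   + \sum_(B : {set T} | B \subset A :\ x) F (x |: B))%R.
Proof.
move=> xA; rewrite (bigID (fun B : {set T} => x \in B)) /= addrC; congr (_ + _)%R.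
  by apply: eq_bigl => B; rewrite subsetD1.
rewrite (reindex_onto (fun B : {set T} => x |: B) (fun B => B :\ x)); last first.
  by move=> B /andP[_ xB]; rewrite setD1K.
apply: eq_bigl => B; rewrite setU11 andbT subUset sub1set xA /= subsetD1.
case: (boolP (x \in B)) => [xB | /setU1K -> //]; last by rewrite eqxx andbT.
rewrite andbF; apply/negbTE/andP => -[_ /eqP B_eq].
by move: xB; rewrite -B_eq !inE eqxx.
Qed.

Definition shapley_coef (s t : nat) : rat := ((t`! * (s - t - 1)`!)%:R / (s`!)%:R)%R.

Lemma shapleyE n h a i (S : {set 'I_n}) :
  shapley h a i S = (\sum_(T : {set 'I_n} | T \subset S :\ i)
    shapley_coef #|S| #|T| * (rho h a (T :|: [set i]) - rho h a T))%R.
Proof. by []. Qed.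

Section ShapleyCoefficients.
Local Open Scope ring_scope.

Lemma natr_fact_neq0 (R : numDomainType) m : m`!%:R != 0 :> R.
Proof. by rewrite pnatr_eq0 -lt0n fact_gt0. Qed.

Lemma shapley_coef_binom m t : (t <= m)%N ->
  shapley_coef m.+1 t *+ 'C(m, t) = m.+1%:R^-1.
Proof.
move=> le_tm; rewrite -[LHS]mulr_natl /shapley_coef (_ : m.+1 - t - 1 = m - t)%N; last by lia.
by rewrite mulrA -natrM bin_fact // factS natrM invfM mulrCA mulfV ?natr_fact_neq0 ?mulr1.
Qed.

Lemma shapley_coef_binom_without m t : (t <= m)%N ->
  shapley_coef m.+2 t *+ 'C(m, t) = (m.+1 - t)%:R / (m.+1 * m.+2)%:R.
Proof.
move=> le_tm; rewrite -[LHS]mulr_natl /shapley_coef.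
rewrite (_ : m.+2 - t - 1 = (m - t).+1)%N; last by lia.
apply/eqP; rewrite mulrA -natrM eqr_div ?natr_fact_neq0 ?pnatr_eq0 // -!natrM eqr_nat.
by rewrite !factS -(bin_fact le_tm) -subSn //; apply/eqP; ring.
Qed.

Lemma shapley_coef_binom_with m t : (t <= m)%N ->
  shapley_coef m.+2 t.+1 *+ 'C(m, t) = t.+1%:R / (m.+1 * m.+2)%:R.
Proof.
move=> le_tm; rewrite -[LHS]mulr_natl /shapley_coef.
rewrite (_ : m.+2 - t.+1 - 1 = m - t)%N; last by lia.
apply/eqP; rewrite mulrA -natrM eqr_div ?natr_fact_neq0 ?pnatr_eq0 // -!natrM eqr_nat.
by rewrite !factS -(bin_fact le_tm); apply/eqP; ring.
Qed.

End ShapleyCoefficients.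

Definition marginal (h w s : nat) : rat :=
  ((if (h <= w + s)%N then 1 else 0) - (if (h <= w)%N then 1 else 0))%R.

Lemma rho_setU1_sub n h a (T : {set 'I_n}) i : i \notin T ->
  (rho h a (T :|: [set i]) - rho h a T)%R = marginal h (wt a T) (stake a i).
Proof. by move=> iT; rewrite /rho /wt setUC big_setU1 //= addnC. Qed.

Lemma sum_marginal h s m : s <= h ->
  (\sum_(t < m) marginal h t s = (minn m h - (h - s))%:R)%R.
Proof.
move=> le_sh; elim: m => [|m IHm]; first by rewrite big_ord0 min0n.
rewrite big_ord_recr /= IHm /marginal.
case: (leqP h m) => [le_hm | lt_mh].
  by rewrite (leq_trans le_hm (leq_addr _ _)) subrr addr0; congr (_%:R)%R; lia.
rewrite subr0; case: ifP => [le_h_ms | /negbT lt_ms_h].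
  by rewrite natr1; congr (_%:R)%R; lia.
by rewrite addr0; congr (_%:R)%R; lia.
Qed.

Lemma sum_mul_marginal1 h (F : nat -> rat) M c : c < h ->
  (\sum_(t < M) F t * marginal h (t + c) 1
   = if (h <= M + c)%N then F (h - c.+1)%N else 0)%R.
Proof.
move=> lt_ch; rewrite (eq_bigr (fun t : 'I_M => if t == h - c.+1 :> nat then F t else 0%R)).
  by rewrite -big_mkcond big_ord1_eq (_ : (h - c.+1 < M) = (h <= M + c)) //; lia.
move=> t _; rewrite /marginal addn1.
have [t_eq | t_neq] := eqVneq (t : nat) (h - c.+1).
  have -> : h <= (t + c).+1 by lia.
  have -> : (h <= t + c) = false by lia.
  by rewrite subr0 mulr1.
have -> : (h <= (t + c).+1) = (h <= t + c) by lia.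
by rewrite subrr mulr0.
Qed.

(* [large_pool_pivots h a m / (m * m.+1)] is the Shapley value of a small
   player in a pool of m.+1 players containing the large one: she is pivotal
   right after h-1 small players, or after the large player and h-a-1 small
   ones. *)
Definition large_pool_pivots (h a m : nat) : nat :=
  (if h <= m then m.+1 - h else 0) + (if h - a <= m then h - a else 0).

Section OneLargePlayer.

Variables (n h a : nat) (z : 'I_n).
Hypothesis z0 : val z = 0.

Lemma stake_large : stake a z = a.
Proof. by rewrite /stake z0. Qed.

Lemma stake_small (j : 'I_n) : j != z -> stake a j = 1.
Proof.
move=> jz; rewrite /stake ifN //; apply: contra jz => /eqP j0.
by apply/eqP/val_inj; rewrite /= j0 z0.
Qed.

Lemma wt_small (T : {set 'I_n}) : z \notin T -> wt a T = #|T|.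
Proof.
move=> zT; rewrite /wt -sum1_card; apply: eq_bigr => j jT.
by apply: stake_small; apply: contraNneq zT => <-.
Qed.

Lemma wt_large_setU1 (T : {set 'I_n}) : z \notin T -> wt a (z |: T) = #|T| + a.
Proof. by move=> zT; rewrite /wt big_setU1 //= stake_large -/(wt a T) wt_small // addnC. Qed.

Lemma shapley_no_large (S : {set 'I_n}) i :
  i \in S -> z \notin S :\ i -> stake a i <= h ->
  shapley h a i S = ((minn #|S| h - (h - stake a i))%:R / #|S|%:R)%R.
Proof.
move=> iS zSi le_sh; have cardS : #|S| = #|S :\ i|.+1 by rewrite (cardsD1 i S) iS.
pose F t := (shapley_coef #|S| t * marginal h t (stake a i))%R.
rewrite shapleyE (eq_bigr (fun T : {set 'I_n} => F #|T|)).
  rewrite sum_subsets_card -cardS -(sum_marginal #|S| le_sh) mulr_suml.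
  apply: eq_bigr => t _; have le_t : t <= #|S :\ i| by rewrite -ltnS -cardS.
  by rewrite -mulrnAl [X in shapley_coef X _]cardS shapley_coef_binom // -cardS mulrC.
move=> T /subsetP sub_T; rewrite rho_setU1_sub ?wt_small //; first exact: contra (sub_T z) zSi.
by apply/negP => /sub_T; rewrite !inE eqxx.
Qed.

Lemma shapley_alone (i : 'I_n) : stake a i < h -> shapley h a i [set i] = 0%R.
Proof.
move=> lt_sh; rewrite shapley_no_large ?set11 ?(ltnW lt_sh) //; last by rewrite setDv inE.
by rewrite cards1 (_ : minn 1 h - (h - stake a i) = 0) ?mul0r //; lia.
Qed.

Lemma shapley_with_large (S : {set 'I_n}) i m :
  a < h -> z \in S -> i \in S -> i != z -> #|S| = m.+2 ->
  shapley h a i S = ((large_pool_pivots h a m.+1)%:R / (m.+1 * m.+2)%:R)%R.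
Proof.
move=> lt_ah zS iS iz cardS; set A := S :\ i :\ z.
have zSi : z \in S :\ i by rewrite !inE eq_sym iz.
have cardA : #|A| = m.
  by move: cardS; rewrite (cardsD1 i S) iS (cardsD1 z (S :\ i)) zSi => -[].
have [zA iA] : z \notin A /\ i \notin A by rewrite !inE !eqxx andbF.
have sub_A (T : {set 'I_n}) : T \subset A -> z \notin T /\ i \notin T.
  by move=> /subsetP sub_T; split; [exact: contra (sub_T z) zA | exact: contra (sub_T i) iA].
pose D := (m.+1 * m.+2)%:R : rat.
pose F0 t := (shapley_coef m.+2 t * marginal h (t + 0) 1)%R.
pose Fa t := (shapley_coef m.+2 t.+1 * marginal h (t + a) 1)%R.
rewrite shapleyE (sum_subsets_setD1 _ zSi) -/A cardS.
rewrite (eq_bigr (fun T : {set 'I_n} => F0 #|T|)); last first.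
  by move=> T /sub_A[zT iT]; rewrite /F0 rho_setU1_sub // wt_small // addn0 stake_small.
rewrite [X in (_ + X)%R](eq_bigr (fun T : {set 'I_n} => Fa #|T|)); last first.
  move=> T /sub_A[zT iT]; have ziT : i \notin z |: T by rewrite !inE negb_or iz.
  by rewrite /Fa cardsU1 zT rho_setU1_sub // wt_large_setU1 // stake_small.
rewrite !sum_subsets_card cardA.
rewrite (eq_bigr (fun t : 'I_m.+1 => (m.+1 - t)%:R / D * marginal h (t + 0) 1)%R); last first.
  by move=> t _; rewrite -mulrnAl shapley_coef_binom_without // -ltnS.
rewrite [X in (_ + X)%R](eq_bigr (fun t : 'I_m.+1 => t.+1%:R / D * marginal h (t + a) 1)%R).
  rewrite (sum_mul_marginal1 (fun t => (m.+1 - t)%:R / D)%R); last by lia.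
  rewrite (sum_mul_marginal1 (fun t => t.+1%:R / D)%R) //.
  rewrite /large_pool_pivots natrD mulrDl addn0.
  rewrite (_ : (h <= m.+1 + a) = (h - a <= m.+1)); last by lia.
  by congr (_ + _)%R; case: ifP => _; rewrite ?mul0r //; congr (_%:R / _)%R; lia.
by move=> t _; rewrite -mulrnAl shapley_coef_binom_with // -ltnS.
Qed.

End OneLargePlayer.

Lemma wt_partition n a (P : {set {set 'I_n}}) : partition P [set: 'I_n] ->
  wt a [set: 'I_n] = \sum_(S in P) wt a S.
Proof. by case/and3P=> /eqP <- trivP _; rewrite /wt big_trivIset. Qed.

Lemma W_mul_le n h a (P : {set {set 'I_n}}) : partition P [set: 'I_n] ->
  W h a P * h <= wt a [set: 'I_n].
Proof.
move=> partP; rewrite (wt_partition a partP) /W -sum_nat_const.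
rewrite [X in _ <= X](bigID (fun S => h <= wt a S)) /=; apply: leq_trans (leq_addr _ _).
rewrite (eq_bigl (fun S => (S \in P) && (h <= wt a S))) => [|S]; last by rewrite inE.
by apply: leq_sum => S /andP[].
Qed.

Lemma OPT_mul_le n h a : OPT n h a * h <= wt a [set: 'I_n].
Proof.
rewrite /OPT; elim/big_ind: _ => // [x y | P]; last exact: W_mul_le.
by rewrite maxnE mulnDl; lia.
Qed.

Lemma W_eq_card n h a (P : {set {set 'I_n}}) :
  (forall S, S \in P -> h <= wt a S) -> W h a P = #|P|.
Proof. by move=> winP; apply: eq_card => S; rewrite inE andb_idr // => /winP. Qed.

(* A small player of a large pool of k.+1 players earns at least 1/(2h),
   which is the most she can get by joining a pool of at least 2h-1 small
   players. *)
Definition large_pool_pays_enough (h a k : nat) : bool :=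
  k * k.+1 <= 2 * h * large_pool_pivots h a k.

Lemma exists_large_pool_size h a : 0 < a < h ->
  exists2 k, h - a <= k < 2 * h &
    large_pool_pays_enough h a k && ~~ large_pool_pays_enough h a k.+1.
Proof.
move=> /andP[a_gt0 lt_ah]; apply: nat_crossing.
- by lia.
- by rewrite /large_pool_pays_enough /large_pool_pivots ifF ?leqnn; nia.
- by rewrite /large_pool_pays_enough /large_pool_pivots !ifT; nia.
Qed.

Lemma large_pool_pays_large_player h a k : 0 < a < h -> h - a <= k < 2 * h ->
  ~~ large_pool_pays_enough h a k.+1 ->
  a * k.+1 <= (minn k.+1 h - (h - a)) * (2 * h).
Proof.
move=> /andP[a_gt0 lt_ah] /andP[le_hak lt_k2h].
rewrite /large_pool_pays_enough /large_pool_pivots -ltnNge.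
case: (leqP h k.+1) => [le_hk | lt_kh]; first by nia.
by rewrite (_ : h - a <= k.+1) 1?minnC /minn ?lt_kh; nia.
Qed.

Definition large_and_small_pools {n} h k (z : 'I_n) (P : {set {set 'I_n}}) : Prop :=
  forall S, S \in P ->
    (z \in S /\ #|S| = k.+1) \/ (z \notin S /\ 2 * h - 1 <= #|S| <= 2 * h).

Section LargeAndSmallPools.

Variables (n h a k : nat) (z : 'I_n) (P : {set {set 'I_n}}).
Hypotheses (z0 : val z = 0) (a_gt0 : 0 < a) (lt_ah : a < h).
Hypotheses (le_hak : h - a <= k) (lt_k2h : k < 2 * h).
Hypotheses (P_partition : partition P [set: 'I_n]) (P_pools : large_and_small_pools h k z P).

Lemma wt_large_pool S : S \in P -> z \in S -> wt a S = k + a.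
Proof.
move=> SP zS; have [[_ cardS] | [/negP //]] := P_pools SP.
rewrite -(setD1K zS) (wt_large_setU1 a z0) ?setD11 //.
by move: cardS; rewrite (cardsD1 z S) zS add1n => -[->].
Qed.

Lemma wt_small_pool S : S \in P -> z \notin S -> h <= wt a S <= 2 * h.
Proof.
move=> SP zS; have [[zS' _] | [_ /andP[le_S le_S']]] := P_pools SP.
  by rewrite zS' in zS.
by rewrite (wt_small a z0) // le_S' andbT; lia.
Qed.

Lemma pool_winning S : S \in P -> h <= wt a S.
Proof.
move=> SP; case: (boolP (z \in S)) => [zS | /(wt_small_pool SP) /andP[] //].
by rewrite (wt_large_pool SP zS); lia.
Qed.

Lemma OPT_le_twice : OPT n h a <= 2 * #|P|.
Proof.
have [/eqP coverP trivP _] := and3P P_partition.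
have zP : z \in cover P by rewrite coverP inE.
set L := pblock P z; have LP : L \in P := pblock_mem zP.
have zL : z \in L by rewrite mem_pblock.
have le_rest : \sum_(S in P :\ L) wt a S <= #|P :\ L| * (2 * h).
  rewrite -sum_nat_const; apply: leq_sum => S /setD1P[neq_SL SP].
  have zS : z \notin S by apply: contra neq_SL => zS; rewrite -(def_pblock trivP SP zS).
  by case/andP: (wt_small_pool SP zS).
have le_OPT := OPT_mul_le n h a.
rewrite (wt_partition a P_partition) (big_setD1 L LP) (wt_large_pool LP zL) in le_OPT.
have {le_OPT le_rest} le_OPT := leq_trans le_OPT (leq_add (leqnn (k + a)) le_rest).
have cardP : #|P| = #|P :\ L|.+1 by rewrite (cardsD1 L P) LP.
have h_gt0 := ltn_trans a_gt0 lt_ah.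
by rewrite -ltnS -(ltn_pmul2r h_gt0); lia.
Qed.

Section Equilibrium.

Hypotheses (pays_k : large_pool_pays_enough h a k)
  (not_pays_k1 : ~~ large_pool_pays_enough h a k.+1).

Local Open Scope ring_scope.

Lemma shapley_home_ge S i : S \in P -> i \in S ->
  (stake a i)%:R / (2 * h)%:R <= shapley h a i S.
Proof.
have h_gt0 := ltn_trans a_gt0 lt_ah.
move=> /P_pools[[zS cardS] | [zS /andP[le_S le_S']]] iS; last first.
  have ziS : z \notin S :\ i by rewrite !inE negb_and zS orbT.
  have iz : i != z by apply: contraNneq zS => <-.
  rewrite (shapley_no_large z0 iS ziS) (stake_small a z0 iz) //.
  by rewrite ler_ratio //; lia.
have [iz | iz] := eqVneq i z.
  subst i; rewrite (shapley_no_large z0 zS) ?setD11 ?stake_large ?cardS ?(ltnW lt_ah) //.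
  rewrite ler_ratio ?muln_gt0 ?h_gt0 //.
  by apply: large_pool_pays_large_player => //; apply/andP.
have k_eq : k = k.-1.+1 by lia.
rewrite (shapley_with_large z0 (m := k.-1)) // -?k_eq ?(stake_small a z0) //.
by move: pays_k; rewrite ler_ratio ?muln_gt0 // /large_pool_pays_enough; lia.
Qed.

Lemma shapley_join_le S i : S \in P -> i \notin S ->
  shapley h a i (S :|: [set i]) <= (stake a i)%:R / (2 * h)%:R.
Proof.
have h_gt0 := ltn_trans a_gt0 lt_ah.
move=> /P_pools[[zS cardS] | [zS /andP[le_S _]]] iS; rewrite setUC.
  have iz : i != z by apply: contraNneq iS => ->.
  rewrite (shapley_with_large z0 (m := k)) ?setU11 ?inE ?zS ?orbT ?cardsU1 ?iS ?cardS //.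
  rewrite (stake_small a z0 iz) ler_ratio ?muln_gt0 //.
  by move: not_pays_k1; rewrite /large_pool_pays_enough; lia.
have le_sh : (stake a i <= h)%N by rewrite /stake; case: ifP; lia.
have ziS : z \notin (i |: S) :\ i by rewrite setU1K.
by rewrite (shapley_no_large z0 (setU11 i S) ziS le_sh) cardsU1 iS ler_ratio //; nia.
Qed.

Lemma NE_large_and_small_pools : NE h a P.
Proof.
split=> // [S /pool_winning // | i S SP iS].
have home := shapley_home_ge SP iS.
have [_ trivP _] := and3P P_partition.
split=> [S' S'P neq_S'S | ].
  have iS' : i \notin S'.
    apply: contra neq_S'S => iS'.
    by rewrite -(def_pblock trivP S'P iS') (def_pblock trivP SP iS).
  exact: le_trans (shapley_join_le S'P iS') home.
have lt_sh : (stake a i < h)%N by rewrite /stake; case: ifP; lia.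
by rewrite (shapley_alone z0 lt_sh); apply: le_trans home; rewrite divr_ge0.
Qed.

End Equilibrium.

End LargeAndSmallPools.

Lemma exists_large_and_small_pools n h k q (z : 'I_n) : val z = 0 -> 0 < h -> k < n ->
  0 < q -> (2 * h - 1) * q <= n - k.+1 <= 2 * h * q ->
  exists2 P : {set {set 'I_n}}, partition P [set: 'I_n] & large_and_small_pools h k z P.
Proof.
move=> z0 h_gt0 lt_kn q_gt0 le_N.
pose lab (y : 'I_n) := if y <= k then 0 else ((y - k.+1) %% q).+1.
exists (preim_partition lab [set: 'I_n]); first exact: preim_partitionP.
move=> _ /imsetP[x _ ->]; rewrite /lab; case: ifP => [_ | /negbT lt_kx]; [left | right].
  have -> : [set y in [set: 'I_n] | 0 == lab y] = [set y : 'I_n | y <= k].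
    by apply/setP => y; rewrite !inE /lab; case: ifP.
  by rewrite inE z0 card_ord_leq.
set j := (x - k.+1) %% q.
have -> : [set y in [set: 'I_n] | j.+1 == lab y] =
          [set y : 'I_n | (k.+1 <= y) && ((y - k.+1) %% q == j)].
  by apply/setP => y; rewrite !inE /lab ltnNge eq_sym; case: ifP.
rewrite inE z0 /= (card_ord_shift (fun p => p %% q == j)) //; split => //.
have h2_eq : 2 * h = (2 * h - 1).+1 by lia.
have := count_mod_iota_bounds (N := n - k.+1) (c := 2 * h - 1) (ltn_pmod (x - k.+1) q_gt0).
by rewrite -h2_eq; apply.
Qed.

Theorem theorem3p10 (n h a : nat) :
  (2 <= a)%N -> (a <= h - 1)%N -> ((2 * h - 1) ^ 2 + h <= n)%N ->
  exists P : {set {set 'I_n}},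
    NE h a P /\ ((OPT n h a)%:R / (W h a P)%:R <= 2 :> rat)%R.
Proof.
rewrite expnS expn1 => a_ge2 le_ah le_n.
have a_gt0 : 0 < a by lia.
have lt_ah : a < h by lia.
have [|k /andP[le_hak lt_k2h] /andP[pays_k not_pays_k1]] := @exists_large_pool_size h a.
  by rewrite a_gt0.
have n_gt0 : 0 < n by lia.
pose z : 'I_n := Ordinal n_gt0; have z0 : val z = 0 by [].
pose q := (n - k.+1) %/ (2 * h - 1).
have le_qN : (2 * h - 1) * q <= n - k.+1 by rewrite mulnC leq_divM.
have le_Nq : n - k.+1 <= 2 * h * q.
  by rewrite (_ : 2 * h = (2 * h - 1).+1); [apply: leq_mulS_divn; nia | lia].
have q_gt0 : 0 < q by rewrite divn_gt0; nia.
have [||P P_partition P_pools] :=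
  exists_large_and_small_pools z0 _ _ q_gt0 (introT andP (conj le_qN le_Nq)); try lia.
have P_gt0 : 0 < #|P|.
  apply/card_gt0P; exists (pblock P z).
  by rewrite pblock_mem // (cover_partition P_partition) inE.
exists P; split.
  exact: NE_large_and_small_pools z0 a_gt0 lt_ah le_hak lt_k2h P_partition P_pools
    pays_k not_pays_k1.
rewrite (W_eq_card (pool_winning z0 a_gt0 lt_ah le_hak lt_k2h P_partition P_pools)).
rewrite ler_pdivrMr ?ltr0n // -natrM ler_nat.
exact: OPT_le_twice z0 a_gt0 lt_ah le_hak lt_k2h P_partition P_pools.
Qed.
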